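(* Let $(\mathscr{A},\mathscr{E})$ and $(\mathscr{B},\mathscr{F})$ be exact categories and let $M : \mathscr{B} \rightarrow \mathscr{A}$ be an exact functor having a right adjoint $R : \mathscr{A}\to\mathscr{B}$ and a left adjoint $L : \mathscr{A}\to\mathscr{B}$. Assume: (i) $\mathscr{A}$ is karoubian (idempotent complete); (ii) $L$ and $R$ are exact functors $(\mathscr{A},\mathscr{E}) \to (\mathscr{B},\mathscr{F})$; (iii) $\mathscr{E}_L^0 = \mathscr{E}_R^0$; denote this class by $\mathscr{E}'$; (iv) for every morphism $f : X \rightarrow X'$ in $\mathscr{A}$ such that there exists $\beta : LX' \to LX$ with $\beta \circ Lf = \mathrm{id}_{LX}$, the morphism $f$ is an inflation of $(\mathscr{A},\mathscr{E})$; (v) for every morphism $f : X \rightarrow X'$ in $\mathscr{A}$ such that there exists $\beta : RX' \to RX$ with $Rf \circ \beta = \mathrm{id}_{RX'}$, the morphism $f$ is a deflation of $(\mathscr{A},\mathscr{E})$. Then $(\mathscr{A},\mathscr{E}')$ is a Frobenius exact category, and its projective-injective objects are exactly the objects of $\mathscr{A}$ that are direct summands of objects of the form $MY$ with $Y \in \mathscr{B}$.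
   Context: An exact category $(\mathscr{A},\mathscr{E})$ is an additive category with a class $\mathscr{E}$ of kernel–cokernel pairs $X \rightarrowtail Y \twoheadrightarrow Z$ (conflations; the first map is an inflation, the second a deflation) satisfying Quillen's axioms; an exact functor sends conflations to conflations. For an exact functor $F:(\mathscr{A},\mathscr{E})\to(\mathscr{B},\mathscr{F})$, $\mathscr{E}_F^0 = \{ s \in \mathscr{E} : Fs \text{ is split exact in } \mathscr{B}\}$; $(\mathscr{A},\mathscr{E}_F^0)$ is an exact category. A Frobenius category is an exact category with enough projectives and enough injectives in which the projective objects coincide with the injective objects. *)

From HB Require Import structures.
From mathcomp Require Import all_boot all_algebra.
Set Implicit Arguments. Unset Strict Implicit. Unset Printing Implicit Defensive.
Import GRing.Theory.
Local Open Scope ring_scope.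

Record precat := PreCat {
  ob :> Type;
  chom : ob -> ob -> zmodType;
  ccomp : forall X Y Z : ob, chom Y Z -> chom X Y -> chom X Z;
  cid : forall X : ob, chom X X }.
Arguments chom {p}.
Arguments ccomp {p X Y Z}.
Arguments cid {p}.

Section Additive.
Variable C : precat.

Definition is_biproduct (X Y P : C) (i1 : chom X P) (i2 : chom Y P)
  (p1 : chom P X) (p2 : chom P Y) : Prop :=
  [/\ ccomp p1 i1 = cid X, ccomp p2 i2 = cid Y, ccomp p1 i2 = 0, ccomp p2 i1 = 0
    & ccomp i1 p1 + ccomp i2 p2 = cid P].

Definition is_zero_object (Z : C) : Prop :=
  forall X : C, (forall f : chom X Z, f = 0) /\ (forall g : chom Z X, g = 0).

Definition is_additive_category : Prop :=
  (forall (X Y Z W : C) (f : chom X Y) (g : chom Y Z) (h : chom Z W),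
          ccomp h (ccomp g f) = ccomp (ccomp h g) f)
  /\ (forall (X Y : C) (f : chom X Y), ccomp (cid Y) f = f /\ ccomp f (cid X) = f)
  /\ (forall (X Y Z : C) (f f' : chom Y Z) (g : chom X Y),
          ccomp (f + f') g = ccomp f g + ccomp f' g)
  /\ (forall (X Y Z : C) (f : chom Y Z) (g g' : chom X Y),
          ccomp f (g + g') = ccomp f g + ccomp f g')
  /\ (exists Z : C, is_zero_object Z)
  /\ (forall X Y : C, exists (P : C) (i1 : chom X P) (i2 : chom Y P)
          (p1 : chom P X) (p2 : chom P Y), is_biproduct i1 i2 p1 p2).

Definition is_iso (X Y : C) (f : chom X Y) : Prop :=
  exists g : chom Y X, ccomp g f = cid X /\ ccomp f g = cid Y.

Definition is_kernel (X Y Z : C) (i : chom X Y) (d : chom Y Z) : Prop :=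
  ccomp d i = 0 /\
  forall (W : C) (g : chom W Y), ccomp d g = 0 -> exists! h : chom W X, ccomp i h = g.

Definition is_cokernel (X Y Z : C) (i : chom X Y) (d : chom Y Z) : Prop :=
  ccomp d i = 0 /\
  forall (W : C) (g : chom Y W), ccomp g i = 0 -> exists! h : chom Z W, ccomp h d = g.

Definition is_kc_pair (X Y Z : C) (i : chom X Y) (d : chom Y Z) : Prop :=
  is_kernel i d /\ is_cokernel i d.

(** A class of composable pairs X -> Y -> Z (candidate conflations). *)
Definition cclass := forall X Y Z : C, chom X Y -> chom Y Z -> Prop.

Definition inflation (E : cclass) (X Y : C) (i : chom X Y) : Prop :=
  exists (Z : C) (d : chom Y Z), E X Y Z i d.
Definition deflation (E : cclass) (Y Z : C) (d : chom Y Z) : Prop :=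
  exists (X : C) (i : chom X Y), E X Y Z i d.

Definition is_pushout (X Y X' P : C) (f : chom X Y) (g : chom X X')
  (f' : chom X' P) (g' : chom Y P) : Prop :=
  ccomp f' g = ccomp g' f /\
  forall (W : C) (u : chom Y W) (v : chom X' W), ccomp u f = ccomp v g ->
    exists! h : chom P W, ccomp h g' = u /\ ccomp h f' = v.

Definition is_pullback (Y Z Z' P : C) (d : chom Y Z) (h : chom Z' Z)
  (d' : chom P Z') (h' : chom P Y) : Prop :=
  ccomp d h' = ccomp h d' /\
  forall (W : C) (u : chom W Y) (v : chom W Z'), ccomp d u = ccomp h v ->
    exists! k : chom W P, ccomp h' k = u /\ ccomp d' k = v.

(** Quillen's axioms (in Bühler's formulation). *)
Definition is_exact_structure (E : cclass) : Prop :=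
  (forall (X Y Z : C) (i : chom X Y) (d : chom Y Z), E X Y Z i d -> is_kc_pair i d)
  /\ (forall (X Y Z X' Y' Z' : C) (i : chom X Y) (d : chom Y Z)
              (i' : chom X' Y') (d' : chom Y' Z')
              (a : chom X X') (b : chom Y Y') (c : chom Z Z'),
          E X Y Z i d -> is_iso a -> is_iso b -> is_iso c ->
          ccomp b i = ccomp i' a -> ccomp c d = ccomp d' b -> E X' Y' Z' i' d')
  /\ (forall X : C, deflation E (cid X))
  /\ (forall X : C, inflation E (cid X))
  /\ (forall (X Y Z : C) (f : chom X Y) (g : chom Y Z),
          deflation E f -> deflation E g -> deflation E (ccomp g f))
  /\ (forall (X Y Z : C) (f : chom X Y) (g : chom Y Z),
          inflation E f -> inflation E g -> inflation E (ccomp g f))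
  /\ (forall (X Y X' : C) (i : chom X Y) (f : chom X X'), inflation E i ->
          exists (P : C) (i' : chom X' P) (f' : chom Y P),
            is_pushout i f i' f' /\ inflation E i')
  /\ (forall (Y Z Z' : C) (d : chom Y Z) (h : chom Z' Z), deflation E d ->
          exists (P : C) (d' : chom P Z') (h' : chom P Y),
            is_pullback d h d' h' /\ deflation E d').

Definition is_exact_category (E : cclass) : Prop :=
  is_additive_category /\ is_exact_structure E.

Definition is_split_exact (X Y Z : C) (i : chom X Y) (d : chom Y Z) : Prop :=
  exists (r : chom Y X) (s : chom Z Y), is_biproduct i s r d.

Definition is_karoubian : Prop :=
  forall (X : C) (e : chom X X), ccomp e e = e ->
    exists (Y : C) (r : chom X Y) (s : chom Y X), ccomp s r = e /\ ccomp r s = cid Y.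

Definition is_projective (E : cclass) (P : C) : Prop :=
  forall (Y Z : C) (d : chom Y Z), deflation E d ->
    forall f : chom P Z, exists g : chom P Y, ccomp d g = f.

Definition is_injective (E : cclass) (I : C) : Prop :=
  forall (X Y : C) (i : chom X Y), inflation E i ->
    forall f : chom X I, exists g : chom Y I, ccomp g i = f.

Definition is_frobenius (E : cclass) : Prop :=
  [/\ is_exact_category E,
      (forall X : C, exists (P : C) (d : chom P X), is_projective E P /\ deflation E d),
      (forall X : C, exists (I : C) (i : chom X I), is_injective E I /\ inflation E i)
    & (forall X : C, is_projective E X <-> is_injective E X)].

Definition is_direct_summand (X W : C) : Prop :=
  exists (X' : C) (i1 : chom X W) (i2 : chom X' W) (p1 : chom W X) (p2 : chom W X'),
    is_biproduct i1 i2 p1 p2.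

End Additive.

Record functor (A B : precat) := Functor {
  fob :> A -> B;
  fmap : forall X Y : A, chom X Y -> chom (fob X) (fob Y) }.
Arguments fmap {A B} f {X Y}.

Definition is_additive_functor (A B : precat) (F : functor A B) : Prop :=
  [/\ (forall (X Y Z : A) (f : chom X Y) (g : chom Y Z),
          fmap F (ccomp g f) = ccomp (fmap F g) (fmap F f)),
      (forall X : A, fmap F (cid X) = cid (F X))
    & (forall (X Y : A) (f g : chom X Y), fmap F (f + g) = fmap F f + fmap F g)].

Definition is_exact_functor (A B : precat) (EA : cclass A) (EB : cclass B)
  (F : functor A B) : Prop :=
  is_additive_functor F /\
  forall (X Y Z : A) (i : chom X Y) (d : chom Y Z),
    EA X Y Z i d -> EB (F X) (F Y) (F Z) (fmap F i) (fmap F d).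

Definition EF0 (A B : precat) (E : cclass A) (F : functor A B) : cclass A :=
  fun X Y Z i d => E X Y Z i d /\ is_split_exact (fmap F i) (fmap F d).

(** F is left adjoint to G (F : B -> A, G : A -> B), via unit and counit. *)
Definition is_adjunction (A B : precat) (F : functor B A) (G : functor A B) : Prop :=
  exists (eta : forall Y : B, chom Y (G (F Y))) (eps : forall X : A, chom (F (G X)) X),
    [/\ (forall (Y Y' : B) (g : chom Y Y'),
            ccomp (eta Y') g = ccomp (fmap G (fmap F g)) (eta Y)),
        (forall (X X' : A) (f : chom X X'),
            ccomp f (eps X) = ccomp (eps X') (fmap F (fmap G f))),
        (forall Y : B, ccomp (eps (F Y)) (fmap F (eta Y)) = cid (F Y))
      & (forall X : A, ccomp (fmap G (eps X)) (eta (G X)) = cid (G X))].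

From mathcomp Require Import all_boot all_algebra.
Set Implicit Arguments. Unset Strict Implicit. Unset Printing Implicit Defensive.
Import GRing.Theory.
Local Open Scope ring_scope.

(* A conflation lies in [E_G^0] iff the image of its inflation has a retraction, iff the
   image of its deflation has a section.  In this form the exact-structure axioms for
   [E_G^0] are inherited from [E], except stability under pushouts and pullbacks: there
   the adjunctions [L -| M] and [M -| R] produce the required retraction (resp. section)
   from the universal property, and they also show that every [M Y] is injective and
   projective for [E']; by hypotheses (iv) and (v) the unit [X -> M L X] and the counit
   [M R X -> X] are an [E']-inflation and an [E']-deflation.  So every object embeds into
   and is covered by projective-injectives of the form [M Y], and by projectivity
   (injectivity) a projective (injective) object is a retract of such an [M Y], i.e. a
   direct summand since [A] is karoubian. *)

Local Notation "g '∘' f" := (ccomp g f) (at level 40, left associativity).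

Section AdditiveCategory.
Variable C : precat.
Hypothesis HC : is_additive_category C.

Lemma ccompA (X Y Z W : C) (f : chom X Y) (g : chom Y Z) (h : chom Z W) :
  h ∘ (g ∘ f) = (h ∘ g) ∘ f.
Proof. by case: HC => H _; apply: H. Qed.

Lemma ccomp1l (X Y : C) (f : chom X Y) : cid Y ∘ f = f.
Proof. by case: HC => _ [H _]; case: (H _ _ f). Qed.

Lemma ccomp1r (X Y : C) (f : chom X Y) : f ∘ cid X = f.
Proof. by case: HC => _ [H _]; case: (H _ _ f). Qed.

Lemma ccompDl (X Y Z : C) (f f' : chom Y Z) (g : chom X Y) :
  (f + f') ∘ g = f ∘ g + f' ∘ g.
Proof. by case: HC => _ [_ [H _]]; apply: H. Qed.

Lemma ccompDr (X Y Z : C) (f : chom Y Z) (g g' : chom X Y) :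
  f ∘ (g + g') = f ∘ g + f ∘ g'.
Proof. by case: HC => _ [_ [_ [H _]]]; apply: H. Qed.

Lemma ccomp0l (X Y Z : C) (g : chom X Y) : (0 : chom Y Z) ∘ g = 0.
Proof. by apply: (addrI ((0 : chom Y Z) ∘ g)); rewrite -ccompDl !addr0. Qed.

Lemma ccomp0r (X Y Z : C) (f : chom Y Z) : f ∘ (0 : chom X Y) = 0.
Proof. by apply: (addrI (f ∘ (0 : chom X Y))); rewrite -ccompDr !addr0. Qed.

Lemma ccompBl (X Y Z : C) (f f' : chom Y Z) (g : chom X Y) :
  (f - f') ∘ g = f ∘ g - f' ∘ g.
Proof. by apply/eqP; rewrite eq_sym subr_eq -ccompDl subrK. Qed.

Lemma ccompBr (X Y Z : C) (f : chom Y Z) (g g' : chom X Y) :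
  f ∘ (g - g') = f ∘ g - f ∘ g'.
Proof. by apply/eqP; rewrite eq_sym subr_eq -ccompDr subrK. Qed.

Lemma is_kernel_monic (X Y Z W : C) (i : chom X Y) (d : chom Y Z) (h1 h2 : chom W X) :
  is_kernel i d -> i ∘ h1 = i ∘ h2 -> h1 = h2.
Proof.
case=> Hdi Hk E.
have H0 : d ∘ (i ∘ h1) = 0 by rewrite ccompA Hdi ccomp0l.
have [h [_ Hu]] := Hk W _ H0.
by rewrite -(Hu h1 erefl) (Hu h2 (esym E)).
Qed.

Lemma is_cokernel_epic (X Y Z W : C) (i : chom X Y) (d : chom Y Z) (h1 h2 : chom Z W) :
  is_cokernel i d -> h1 ∘ d = h2 ∘ d -> h1 = h2.
Proof.
case=> Hdi Hk E.
have H0 : (h1 ∘ d) ∘ i = 0 by rewrite -ccompA Hdi ccomp0r.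
have [h [_ Hu]] := Hk W _ H0.
by rewrite -(Hu h1 erefl) (Hu h2 (esym E)).
Qed.

Lemma split_exact_of_section (X Y Z : C) (i : chom X Y) (d : chom Y Z) (s : chom Z Y) :
  is_kc_pair i d -> d ∘ s = cid Z -> is_split_exact i d.
Proof.
case=> Hk _ Hds; have Hdi := Hk.1.
have H0 : d ∘ (cid Y - s ∘ d) = 0 by rewrite ccompBr ccomp1r ccompA Hds ccomp1l subrr.
have [r [Hr _]] := Hk.2 Y _ H0.
exists r, s; split=> //.
- apply: (is_kernel_monic Hk).
  by rewrite ccompA Hr ccomp1r ccompBl ccomp1l -ccompA Hdi ccomp0r subr0.
- apply: (is_kernel_monic Hk).
  by rewrite ccompA Hr ccomp0r ccompBl ccomp1l -ccompA Hds ccomp1r subrr.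
- by rewrite Hr subrK.
Qed.

Lemma split_exact_of_retraction (X Y Z : C) (i : chom X Y) (d : chom Y Z) (p : chom Y X) :
  is_kc_pair i d -> p ∘ i = cid X -> is_split_exact i d.
Proof.
case=> _ Hc Hpi; have Hdi := Hc.1.
have H0 : (cid Y - i ∘ p) ∘ i = 0 by rewrite ccompBl ccomp1l -ccompA Hpi ccomp1r subrr.
have [s [Hs _]] := Hc.2 Y _ H0.
exists p, s; split=> //.
- apply: (is_cokernel_epic Hc).
  by rewrite -ccompA Hs ccompBr ccomp1r ccompA Hdi ccomp0l subr0 ccomp1l.
- apply: (is_cokernel_epic Hc).
  by rewrite -ccompA Hs ccompBr ccomp1r ccompA Hpi ccomp1l subrr ccomp0l.
- by rewrite Hs addrC subrK.
Qed.

(* The complement of [X] is the image of the idempotent [1 - s p]. *)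
Lemma direct_summand_of_retraction (kar : is_karoubian C) (X W : C)
    (p : chom W X) (s : chom X W) :
  p ∘ s = cid X -> is_direct_summand X W.
Proof.
move=> Hps.
have He : (cid W - s ∘ p) ∘ (cid W - s ∘ p) = cid W - s ∘ p.
  by rewrite ccompBl ccomp1l ccompBr ccomp1r -!ccompA (ccompA p s) Hps ccomp1l subrr subr0.
have [X' [r [t [Htr Hrt]]]] := kar _ _ He.
exists X', s, t, p, r; split=> //.
- have -> : p ∘ t = (p ∘ (t ∘ r)) ∘ t by rewrite -!ccompA Hrt ccomp1r.
  by rewrite Htr ccompBr ccomp1r ccompA Hps ccomp1l subrr ccomp0l.
- have -> : r ∘ s = r ∘ ((t ∘ r) ∘ s) by rewrite !ccompA Hrt ccomp1l.
  by rewrite Htr ccompBl ccomp1l -ccompA Hps ccomp1r subrr ccomp0r.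
- by rewrite Htr addrC subrK.
Qed.

Lemma projective_retract (E : cclass C) (W P : C) (p : chom W P) (s : chom P W) :
  is_projective E W -> p ∘ s = cid P -> is_projective E P.
Proof.
move=> HW Hps Y Z d Hd f.
have [g Hg] := HW Y Z d Hd (f ∘ p).
by exists (g ∘ s); rewrite ccompA Hg -ccompA Hps ccomp1r.
Qed.

Lemma injective_retract (E : cclass C) (W I : C) (p : chom W I) (s : chom I W) :
  is_injective E W -> p ∘ s = cid I -> is_injective E I.
Proof.
move=> HW Hps X Y i Hi f.
have [g Hg] := HW X Y i Hi (s ∘ f).
by exists (p ∘ g); rewrite -ccompA Hg ccompA Hps ccomp1l.
Qed.

End AdditiveCategory.

Definition pushout_stable (C : precat) (E : cclass C) : Prop :=
  forall (X Y X' : C) (i : chom X Y) (f : chom X X'), inflation E i ->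
    exists (P : C) (i' : chom X' P) (f' : chom Y P),
      is_pushout i f i' f' /\ inflation E i'.

Definition pullback_stable (C : precat) (E : cclass C) : Prop :=
  forall (Y Z Z' : C) (d : chom Y Z) (h : chom Z' Z), deflation E d ->
    exists (P : C) (d' : chom P Z') (h' : chom P Y),
      is_pullback d h d' h' /\ deflation E d'.

Section EquivalentClasses.
Variables (C : precat) (E1 E2 : cclass C).
Hypothesis E12 : forall (X Y Z : C) (i : chom X Y) (d : chom Y Z),
  E1 i d <-> E2 i d.

Lemma deflation_equiv (Y Z : C) (d : chom Y Z) : deflation E1 d <-> deflation E2 d.
Proof. by split=> [[X [i /E12 H]] | [X [i /E12 H]]]; exists X, i. Qed.

Lemma pullback_stable_equiv : pullback_stable E2 -> pullback_stable E1.
Proof.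
move=> pb Y Z Z' d h /deflation_equiv Hd.
have [P [d' [h' [Hpb /deflation_equiv Hd']]]] := pb Y Z Z' d h Hd.
by exists P, d', h'.
Qed.

End EquivalentClasses.

Section AdditiveFunctor.
Variables (A B : precat) (G : functor A B).
Hypothesis HG : is_additive_functor G.

Lemma fmapM (X Y Z : A) (f : chom X Y) (g : chom Y Z) :
  fmap G (g ∘ f) = fmap G g ∘ fmap G f.
Proof. by case: HG. Qed.

Lemma fmap1 (X : A) : fmap G (cid X) = cid (G X).
Proof. by case: HG. Qed.

End AdditiveFunctor.

Section SplitConflations.
Variables (A B : precat) (E : cclass A) (F : cclass B) (G : functor A B).
Hypotheses (HB : is_exact_category F) (HG : is_exact_functor E F G).

Lemma EF0_retractionP (X Y Z : A) (i : chom X Y) (d : chom Y Z) :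
  EF0 E G i d <-> E i d /\ exists p, p ∘ fmap G i = cid (G X).
Proof.
split=> [[HE [r [s [Hri _ _ _ _]]]] | [HE [p Hp]]]; first by split=> //; exists r.
split=> //; apply: (split_exact_of_retraction HB.1 _ Hp).
exact: HB.2.1 _ _ _ _ _ (HG.2 _ _ _ _ _ HE).
Qed.

Lemma EF0_sectionP (X Y Z : A) (i : chom X Y) (d : chom Y Z) :
  EF0 E G i d <-> E i d /\ exists s, fmap G d ∘ s = cid (G Z).
Proof.
split=> [[HE [r [s [_ Hds _ _ _]]]] | [HE [s Hs]]]; first by split=> //; exists s.
split=> //; apply: (split_exact_of_section HB.1 _ Hs).
exact: HB.2.1 _ _ _ _ _ (HG.2 _ _ _ _ _ HE).
Qed.

Lemma inflation_EF0P (X Y : A) (i : chom X Y) :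
  inflation (EF0 E G) i <-> inflation E i /\ exists p, p ∘ fmap G i = cid (G X).
Proof.
split=> [[Z [d /EF0_retractionP [HE Hp]]] | [[Z [d HE]] Hp]].
  by split=> //; exists Z, d.
by exists Z, d; apply/EF0_retractionP.
Qed.

Lemma deflation_EF0P (Y Z : A) (d : chom Y Z) :
  deflation (EF0 E G) d <-> deflation E d /\ exists s, fmap G d ∘ s = cid (G Z).
Proof.
split=> [[X [i /EF0_sectionP [HE Hs]]] | [[X [i HE]] Hs]].
  by split=> //; exists X, i.
by exists X, i; apply/EF0_sectionP.
Qed.

End SplitConflations.

Section SplitExactStructure.
Variables (A B : precat) (E : cclass A) (F : cclass B) (G : functor A B).
Hypotheses (HA : is_exact_category E) (HB : is_exact_category F)
  (HG : is_exact_functor E F G).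
Let HAa := HA.1.
Let HBa := HB.1.
Let HGa := HG.1.

Lemma EF0_iso_closed (X Y Z X' Y' Z' : A) (i : chom X Y) (d : chom Y Z)
    (i' : chom X' Y') (d' : chom Y' Z') (a : chom X X') (b : chom Y Y') (c : chom Z Z') :
  EF0 E G i d -> is_iso a -> is_iso b -> is_iso c ->
  b ∘ i = i' ∘ a -> c ∘ d = d' ∘ b -> EF0 E G i' d'.
Proof.
move=> /(EF0_retractionP HB HG) [HE [p Hp]] Ha Hb Hc Hbi Hcd.
have HE' := HA.2.2.1 _ _ _ _ _ _ _ _ _ _ _ _ _ HE Ha Hb Hc Hbi Hcd.
case: Ha => ai [_ Haai]; case: Hb => bi [Hbib _].
have Hi' : bi ∘ i' = i ∘ ai.
  by rewrite -[bi ∘ i'](ccomp1r HAa) -Haai !(ccompA HAa) -(ccompA HAa _ _ bi) -Hbi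
     (ccompA HAa) Hbib (ccomp1l HAa).
apply/(EF0_retractionP HB HG); split=> //; exists (fmap G a ∘ p ∘ fmap G bi).
by rewrite -!(ccompA HBa) -(fmapM HGa) Hi' (fmapM HGa) (ccompA HBa _ _ p) Hp
  (ccomp1l HBa) -(fmapM HGa) Haai (fmap1 HGa).
Qed.

Lemma EF0_deflation_id (X : A) : deflation (EF0 E G) (cid X).
Proof.
apply/(deflation_EF0P HB HG); split; first exact: HA.2.2.2.1.
by exists (cid (G X)); rewrite (fmap1 HGa) (ccomp1l HBa).
Qed.

Lemma EF0_inflation_id (X : A) : inflation (EF0 E G) (cid X).
Proof.
apply/(inflation_EF0P HB HG); split; first exact: HA.2.2.2.2.1.
by exists (cid (G X)); rewrite (fmap1 HGa) (ccomp1l HBa).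
Qed.

Lemma EF0_deflation_comp (X Y Z : A) (f : chom X Y) (g : chom Y Z) :
  deflation (EF0 E G) f -> deflation (EF0 E G) g -> deflation (EF0 E G) (g ∘ f).
Proof.
move=> /(deflation_EF0P HB HG) [Hf [sf Hsf]] /(deflation_EF0P HB HG) [Hg [sg Hsg]].
apply/(deflation_EF0P HB HG); split; first exact: HA.2.2.2.2.2.1 _ _ _ _ _ Hf Hg.
exists (sf ∘ sg).
by rewrite (fmapM HGa) -(ccompA HBa) (ccompA HBa _ _ (fmap G f)) Hsf (ccomp1l HBa) Hsg.
Qed.

Lemma EF0_inflation_comp (X Y Z : A) (f : chom X Y) (g : chom Y Z) :
  inflation (EF0 E G) f -> inflation (EF0 E G) g -> inflation (EF0 E G) (g ∘ f).
Proof.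
move=> /(inflation_EF0P HB HG) [Hf [pf Hpf]] /(inflation_EF0P HB HG) [Hg [pg Hpg]].
apply/(inflation_EF0P HB HG); split; first exact: HA.2.2.2.2.2.2.1 _ _ _ _ _ Hf Hg.
exists (pf ∘ pg).
by rewrite (fmapM HGa) -(ccompA HBa) (ccompA HBa _ _ pg) Hpg (ccomp1l HBa) Hpf.
Qed.

Lemma EF0_exact_structure :
  pushout_stable (EF0 E G) -> pullback_stable (EF0 E G) -> is_exact_structure (EF0 E G).
Proof.
move=> po pb.
split; first by move=> X Y Z i d [HE _]; exact: HA.2.1 _ _ _ _ _ HE.
split; first exact: EF0_iso_closed.
split; first exact: EF0_deflation_id.
split; first exact: EF0_inflation_id.
split; first exact: EF0_deflation_comp.
by split; first exact: EF0_inflation_comp.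
Qed.

End SplitExactStructure.

Section LeftAdjoint.
Variables (A B : precat) (E : cclass A) (F : cclass B) (G : functor A B) (M : functor B A).
Hypotheses (HA : is_exact_category E) (HB : is_exact_category F)
  (HG : is_exact_functor E F G) (HM : is_additive_functor M) (adj : is_adjunction G M).
Let HAa := HA.1.
Let HBa := HB.1.
Let HGa := HG.1.

(* A map [h : P -> M G X'] out of the pushout restricting to the unit on [X'] is built
   from a retraction [p] of [G i]; its transpose retracts [G i']. *)
Lemma EF0_pushout_stable : pushout_stable (EF0 E G).
Proof.
case: adj => eta [eps [etaN _ tri1 _]].
move=> X Y X' i f /(inflation_EF0P HB HG) [Hi [p Hp]].
have [P [i' [f' [Hpo Hi']]]] := HA.2.2.2.2.2.2.2.1 X Y X' i f Hi.
have Huv : (fmap M (fmap G f ∘ p) ∘ eta Y) ∘ i = eta X' ∘ f.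
  rewrite -(ccompA HAa) (etaN _ _ i) (ccompA HAa) -(fmapM HM) -(ccompA HBa) Hp.
  by rewrite (ccomp1r HBa) etaN.
have [h [[_ Hh] _]] := Hpo.2 _ _ _ Huv.
exists P, i', f'; split=> //; apply/(inflation_EF0P HB HG); split=> //.
by exists (eps (G X') ∘ fmap G h); rewrite -(ccompA HBa) -(fmapM HGa) Hh tri1.
Qed.

Lemma EF0_injective_image (Y0 : B) : is_injective (EF0 E G) (M Y0).
Proof.
case: adj => eta [eps [etaN _ _ tri2]].
move=> X Y i /(inflation_EF0P HB HG) [_ [p Hp]] f.
exists (fmap M (eps Y0 ∘ fmap G f ∘ p) ∘ eta Y).
rewrite -(ccompA HAa) (etaN _ _ i) (ccompA HAa) -(fmapM HM) -(ccompA HBa) Hp.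
by rewrite (ccomp1r HBa) (fmapM HM) -(ccompA HAa) -etaN (ccompA HAa) tri2 (ccomp1l HAa).
Qed.

End LeftAdjoint.

Section RightAdjoint.
Variables (A B : precat) (E : cclass A) (F : cclass B) (G : functor A B) (M : functor B A).
Hypotheses (HA : is_exact_category E) (HB : is_exact_category F)
  (HG : is_exact_functor E F G) (HM : is_additive_functor M) (adj : is_adjunction M G).
Let HAa := HA.1.
Let HBa := HB.1.
Let HGa := HG.1.

Lemma EF0_pullback_stable : pullback_stable (EF0 E G).
Proof.
case: adj => eta [eps [_ epsN _ tri2]].
move=> Y Z Z' d h /(deflation_EF0P HB HG) [Hd [s Hs]].
have [P [d' [h' [Hpb Hd']]]] := HA.2.2.2.2.2.2.2.2 Y Z Z' d h Hd.
have Huv : d ∘ (eps Y ∘ fmap M (s ∘ fmap G h)) = h ∘ eps Z'.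
  rewrite (ccompA HAa) (epsN _ _ d) -(ccompA HAa) -(fmapM HM) (ccompA HBa) Hs.
  by rewrite (ccomp1l HBa) epsN.
have [k [[_ Hk] _]] := Hpb.2 _ _ _ Huv.
exists P, d', h'; split=> //; apply/(deflation_EF0P HB HG); split=> //.
by exists (fmap G k ∘ eta (G Z')); rewrite (ccompA HBa) -(fmapM HGa) Hk tri2.
Qed.

Lemma EF0_projective_image (Y0 : B) : is_projective (EF0 E G) (M Y0).
Proof.
case: adj => eta [eps [_ epsN tri1 _]].
move=> Y Z d /(deflation_EF0P HB HG) [_ [s Hs]] f.
exists (eps Y ∘ fmap M (s ∘ fmap G f ∘ eta Y0)).
rewrite (ccompA HAa) (epsN _ _ d) -(ccompA HAa) -(fmapM HM) !(ccompA HBa) Hs.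
by rewrite (ccomp1l HBa) (fmapM HM) (ccompA HAa) -epsN -(ccompA HAa) tri1 (ccomp1r HAa).
Qed.

End RightAdjoint.

Section Frobenius.
Variables (C : precat) (E : cclass C) (J : Type) (Q : J -> C).
Hypotheses (HC : is_additive_category C)
  (Q_projective : forall j, is_projective E (Q j))
  (Q_injective : forall j, is_injective E (Q j))
  (Q_cover : forall X, exists j (d : chom (Q j) X), deflation E d)
  (Q_envelope : forall X, exists j (i : chom X (Q j)), inflation E i).

Definition retract_of_Q (X : C) : Prop :=
  exists j (p : chom (Q j) X) (s : chom X (Q j)), p ∘ s = cid X.

Lemma projective_retract_of_Q (X : C) : is_projective E X -> retract_of_Q X.
Proof.
move=> HX; have [j [d Hd]] := Q_cover X.
by have [s Hs] := HX _ _ _ Hd (cid X); exists j, d, s.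
Qed.

Lemma injective_retract_of_Q (X : C) : is_injective E X -> retract_of_Q X.
Proof.
move=> HX; have [j [i Hi]] := Q_envelope X.
by have [p Hp] := HX _ _ _ Hi (cid X); exists j, p, i.
Qed.

Lemma retract_of_Q_projective_injective (X : C) :
  retract_of_Q X -> is_projective E X /\ is_injective E X.
Proof.
case=> j [p [s Hps]].
split; first exact: (projective_retract HC (@Q_projective j) Hps).
exact: (injective_retract HC (@Q_injective j) Hps).
Qed.

Lemma frobenius_of_projective_injective_cover :
  is_exact_category E -> is_frobenius E.
Proof.
move=> HE; split=> // X.
- by have [j [d Hd]] := Q_cover X; exists (Q j), d.
- by have [j [i Hi]] := Q_envelope X; exists (Q j), i.
- split=> [/projective_retract_of_Q | /injective_retract_of_Q];
    by case/retract_of_Q_projective_injective.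
Qed.

Lemma projective_injective_summandP (kar : is_karoubian C) (X : C) :
  is_projective E X /\ is_injective E X <-> exists j, is_direct_summand X (Q j).
Proof.
split=> [[/projective_retract_of_Q [j [p [s Hps]]] _] | [j [X' [i1 [_ [p1 [_ [H _ _ _ _]]]]]]]].
  by exists j; exact: direct_summand_of_retraction Hps.
by apply: retract_of_Q_projective_injective; exists j, p1, i1.
Qed.

End Frobenius.

Theorem mainTheorem3 (A B : precat) (E : cclass A) (F : cclass B)
  (M : functor B A) (R L : functor A B) :
  is_exact_category E -> is_exact_category F ->
  is_exact_functor F E M ->
  is_adjunction M R ->           (* M -| R *)
  is_adjunction L M ->           (* L -| M *)
  is_karoubian A ->
  is_exact_functor E F L -> is_exact_functor E F R ->
  (forall (X Y Z : A) (i : chom X Y) (d : chom Y Z),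
      EF0 E L i d <-> EF0 E R i d) ->
  (forall (X X' : A) (f : chom X X'),
      (exists beta : chom (L X') (L X), ccomp beta (fmap L f) = cid (L X)) ->
      inflation E f) ->
  (forall (X X' : A) (f : chom X X'),
      (exists beta : chom (R X') (R X), ccomp (fmap R f) beta = cid (R X')) ->
      deflation E f) ->
  is_frobenius (EF0 E L) /\
  (forall X : A,
      (is_projective (EF0 E L) X /\ is_injective (EF0 E L) X) <->
      exists Y : B, is_direct_summand X (M Y)).
Proof.
move=> HA HB [HM _] adjR adjL kar HL HR HLR Linfl Rdefl.
have HE' : is_exact_category (EF0 E L).
  split; first exact: HA.1.
  apply: (EF0_exact_structure HA HB HL); first exact: (EF0_pushout_stable HA HB HL HM adjL).
  exact/(pullback_stable_equiv HLR)/(EF0_pullback_stable HA HB HR HM adjR).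
have projM (Y : B) : is_projective (EF0 E L) (M Y).
  by move=> W Z d /(deflation_equiv HLR); apply: (EF0_projective_image HA HB HR HM adjR).
have cover (X : A) : exists Y (d : chom (M Y) X), deflation (EF0 E L) d.
  case: adjR => eta [eps [_ _ _ tri2]].
  exists (R X), (eps X); apply/(deflation_equiv HLR)/(deflation_EF0P HB HR).
  by split; [apply: Rdefl |]; exists (eta (R X)); exact: tri2.
have envelope (X : A) : exists Y (i : chom X (M Y)), inflation (EF0 E L) i.
  case: adjL => eta [eps [_ _ tri1 _]].
  exists (L X), (eta X); apply/(inflation_EF0P HB HL).
  by split; [apply: Linfl |]; exists (eps (L X)); exact: tri1.
have injM := EF0_injective_image HA HB HL HM adjL.
split; first exact: frobenius_of_projective_injective_cover HA.1 projM injM cover envelope HE'.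
exact: projective_injective_summandP HA.1 projM injM cover kar.
Qed.
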